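(* Let $\mathcal{O}$ be the fixed one-counter net described in the context and let the formulas $\psi_i$ ($i\ge1$) be as defined there. Then for all $n\ge0$ and $i\ge1$: $(\bar t,n)\models\psi_i$ if and only if $\mathrm{bit}_i(n)=1$.
   Context: $\mathrm{bit}_i(n)$ is the $i$-th least significant bit of $n$, i.e. $n=\sum_{i\ge1}2^{i-1}\mathrm{bit}_i(n)$. A one-counter net is a tuple $(Q,\{Q_p\},\delta_0,\delta_{>0})$ with $\delta_0\subseteq Q\times\{0,1\}\times Q$, $\delta_{>0}\subseteq Q\times\{-1,0,1\}\times Q$ and $\delta_0\subseteq\delta_{>0}$; its transition system has states $Q\times\mathbb{N}$, $(q,n)$ satisfies $p$ iff $q\in Q_p$, and $(q,n)\to(q',n+k)$ iff either $n=0$ and $(q,k,q')\in\delta_0$, or $n>0$ and $(q,k,q')\in\delta_{>0}$. The fixed net $\mathcal{O}$ has control locations $t,\bar t,q_0,q_1,q_2,q_3,f,g,p_0,p_1$; the atomic propositions are the control locations, each holding exactly at itself. $\delta_{>0}$ consists of $(q_0,-1,q_1)$, $(q_1,-1,q_2)$, $(q_2,-1,q_3)$, $(q_3,-1,q_0)$, $(q_1,-1,q_1)$, $(q_3,-1,q_3)$, $(q_0,0,t)$, $(t,0,q_0)$, $(q_2,0,t)$, $(q_1,0,\bar t)$, $(\bar t,0,q_1)$, $(\bar t,0,q_2)$, $(q_3,0,\bar t)$, $(\bar t,0,q_3)$, $(t,0,f)$, $(\bar t,-1,f)$, $(f,-1,g)$, $(g,-1,f)$, $(\bar t,1,p_1)$,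 $(p_1,1,p_1)$, $(p_1,0,\bar t)$, $(p_0,0,\bar t)$, $(\bar t,0,p_0)$; and $\delta_0=\{(\bar t,1,p_1),(p_0,0,\bar t),(\bar t,0,p_0),(t,0,q_0),(t,0,f)\}$. $\mathsf{CTL}$ is interpreted with standard semantics; $\mathsf{EF}\psi$ abbreviates $\exists\,\mathtt{true}\,\mathsf{U}\,\psi$. Let $\mathrm{test}=t\vee\bar t$, $\varphi_\diamond=q_0\vee q_1\vee q_2\vee q_3$, $\varphi_1=\mathrm{test}\wedge\exists\mathsf{X}\big(f\wedge\mathsf{EF}(f\wedge\neg\exists\mathsf{X}g)\big)$, and for $i>1$: $\mu_i=\exists(\varphi_\diamond\wedge\exists\mathsf{X}\varphi_{i-1})\,\mathsf{U}\,(q_0\wedge\neg\exists\mathsf{X}q_1)$, $\varphi_i=\mathrm{test}\wedge\exists\mathsf{X}\mu_i$. Finally $\psi_1=\varphi_1$ and $\psi_i=\bar t\wedge\exists\mathsf{X}\big((q_1\vee q_2)\wedge\mu_i\big)$ for $i>1$. *)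

From Stdlib Require Import ZArith List Arith.
Import ListNotations.

Inductive loc : Type := t | tbar | q0 | q1 | q2 | q3 | f | g | p0 | p1.

Definition loc_eq_dec (a b : loc) : {a = b} + {a <> b}.
Proof. decide equality. Defined.

Definition delta_pos : list (loc * Z * loc) :=
  [ (q0, (-1)%Z, q1); (q1, (-1)%Z, q2); (q2, (-1)%Z, q3); (q3, (-1)%Z, q0);
    (q1, (-1)%Z, q1); (q3, (-1)%Z, q3);
    (q0, 0%Z, t); (t, 0%Z, q0); (q2, 0%Z, t);
    (q1, 0%Z, tbar); (tbar, 0%Z, q1); (tbar, 0%Z, q2);
    (q3, 0%Z, tbar); (tbar, 0%Z, q3);
    (t, 0%Z, f); (tbar, (-1)%Z, f); (f, (-1)%Z, g); (g, (-1)%Z, f);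
    (tbar, 1%Z, p1); (p1, 1%Z, p1); (p1, 0%Z, tbar);
    (p0, 0%Z, tbar); (tbar, 0%Z, p0) ].

Definition delta_zero : list (loc * Z * loc) :=
  [ (tbar, 1%Z, p1); (p0, 0%Z, tbar); (tbar, 0%Z, p0); (t, 0%Z, q0); (t, 0%Z, f) ].

Definition config : Type := (loc * nat)%type.

Definition step (c c' : config) : Prop :=
  let (q, n) := c in
  let (q', n') := c' in
  exists k : Z,
    Z.of_nat n' = (Z.of_nat n + k)%Z /\
    ((n = 0 /\ In (q, k, q') delta_zero) \/
     (0 < n /\ In (q, k, q') delta_pos)).

Inductive ctl : Type :=
| CTrue : ctl
| CAtom : loc -> ctl
| CNot : ctl -> ctl
| CAnd : ctl -> ctl -> ctl
| COr : ctl -> ctl -> ctl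
| CEX : ctl -> ctl
| CEU : ctl -> ctl -> ctl.

Inductive EU_holds (P Q : config -> Prop) : config -> Prop :=
| EU_now : forall c, Q c -> EU_holds P Q c
| EU_later : forall c c', P c -> step c c' -> EU_holds P Q c' -> EU_holds P Q c.

Fixpoint sat (phi : ctl) (c : config) : Prop :=
  match phi with
  | CTrue => True
  | CAtom p => fst c = p
  | CNot a => ~ sat a c
  | CAnd a b => sat a c /\ sat b c
  | COr a b => sat a c \/ sat b c
  | CEX a => exists c', step c c' /\ sat a c'
  | CEU a b => EU_holds (sat a) (sat b) c
  end.

Definition CEF (a : ctl) : ctl := CEU CTrue a.

Definition test : ctl := COr (CAtom t) (CAtom tbar).
Definition phi_diamond : ctl :=
  COr (COr (CAtom q0) (CAtom q1)) (COr (CAtom q2) (CAtom q3)).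

Definition phi1 : ctl :=
  CAnd test (CEX (CAnd (CAtom f) (CEF (CAnd (CAtom f) (CNot (CEX (CAtom g))))))).

Definition mu_of (prev : ctl) : ctl :=
  CEU (CAnd phi_diamond (CEX prev)) (CAnd (CAtom q0) (CNot (CEX (CAtom q1)))).

(* phi i for i >= 1 (phi 0 is an irrelevant default equal to phi 1). *)
Fixpoint phi (i : nat) : ctl :=
  match i with
  | 0 => phi1
  | S j => match j with
           | 0 => phi1
           | _ => CAnd test (CEX (mu_of (phi j)))
           end
  end.

Definition mu (i : nat) : ctl := mu_of (phi (i - 1)).

Definition psi (i : nat) : ctl :=
  match i with
  | 0 | 1 => phi1
  | _ => CAnd (CAtom tbar) (CEX (CAnd (COr (CAtom q1) (CAtom q2)) (mu i)))
  end.

Definition bit (i n : nat) : nat := (n / 2 ^ (i - 1)) mod 2.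

(* A formula tests divisibility by M if it holds at (t, n) exactly when M | n and
   at (tbar, n) exactly when M does not divide n.  phi_1 tests divisibility by 2:
   from f the only moves alternate f, g while decrementing, so f gets stuck at 0
   exactly after an even number of decrements.  If phi tests divisibility by M,
   then mu_of phi holds at (l, c) iff the location l in the cycle q0 -> q1 -> q2
   -> q3 -> q0 records where c mod 2M lies: q0 at 0, q1 above M, q2 at M, q3
   strictly between 0 and M.  Indeed a run of mu_of phi counts the counter down
   to (q0, 0); leaving q0 or q2 requires M | c (via t), leaving q1 or q3 requires
   the opposite (via tbar), and the self-loops on q1, q3 let the run wait out the
   residues strictly between the multiples of M.  Hence the next phi tests
   divisibility by 2M, and psi_i at (tbar, n) says that n mod 2^i >= 2^(i-1). *)

From Stdlib Require Import ZArith List Arith Lia.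

Lemma mod_succ_cases N d : N <> 0 ->
  (S d mod N = 0 /\ d mod N = N - 1) \/ S d mod N = d mod N + 1.
Proof.
  intros HN. pose proof (Nat.mod_upper_bound d N HN).
  replace (S d) with (d + 1) by lia.
  rewrite <- Nat.Div0.add_mod_idemp_l.
  destruct (Nat.eq_dec (d mod N + 1) N) as [E|E].
  - left. rewrite E, Nat.Div0.mod_same. lia.
  - right. rewrite Nat.mod_small by lia. reflexivity.
Qed.

Lemma mod2_pred m : 0 < m -> m mod 2 + (m - 1) mod 2 = 1.
Proof.
  intros Hm. destruct m as [|d]; [lia|]. replace (S d - 1) with d by lia.
  pose proof (mod_succ_cases 2 d ltac:(lia)).
  pose proof (Nat.mod_upper_bound d 2 ltac:(lia)).
  pose proof (Nat.mod_upper_bound (S d) 2 ltac:(lia)). lia.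
Qed.

Lemma mod_double M c : M <> 0 -> c mod (2 * M) = c mod M + M * ((c / M) mod 2).
Proof. intros HM. replace (2 * M) with (M * 2) by lia. apply Nat.Div0.mod_mul_r. Qed.

Lemma mod_double_eq0 M c : M <> 0 ->
  (c mod M = 0 <-> c mod (2 * M) = 0 \/ c mod (2 * M) = M).
Proof.
  intros HM. rewrite (mod_double M c HM).
  pose proof (Nat.mod_upper_bound c M HM).
  pose proof (Nat.mod_upper_bound (c / M) 2 ltac:(lia)).
  destruct ((c / M) mod 2) as [|[|]]; nia.
Qed.

Lemma mod_double_ge M c : M <> 0 -> (M <= c mod (2 * M) <-> (c / M) mod 2 = 1).
Proof.
  intros HM. rewrite (mod_double M c HM).
  pose proof (Nat.mod_upper_bound c M HM).
  pose proof (Nat.mod_upper_bound (c / M) 2 ltac:(lia)).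
  destruct ((c / M) mod 2) as [|[|]]; nia.
Qed.

Lemma pow2_succ_ge2 j : 2 <= 2 ^ S j.
Proof. pose proof (Nat.pow_nonzero 2 j ltac:(lia)). cbn [Nat.pow]. lia. Qed.

Ltac pick := match goal with
  | |- _ /\ _ => split; pick
  | |- _ \/ _ => first [left; pick | right; pick]
  | _ => first [reflexivity | lia | discriminate]
  end.

Ltac inv_step H :=
  let k := fresh "k" in let Hk := fresh "Hk" in
  let Hc := fresh "Hc" in let Hin := fresh "Hin" in
  destruct H as [k [Hk [[Hc Hin] | [Hc Hin]]]]; simpl in Hin;
  repeat destruct Hin as [Hin | Hin]; inversion Hin; subst; clear Hin.

Ltac solve_step :=
  let in_list := simpl; repeat first [left; reflexivity | right] in
  let go k := exists k; split;
    [lia | first [left; split; [lia | solve [in_list]]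
                 | right; split; [lia | solve [in_list]]]] in
  first [go 0%Z | go (-1)%Z | go 1%Z].

Lemma step_q0 c l' c' : step (q0, c) (l', c') ->
  0 < c /\ ((l' = q1 /\ c' = c - 1) \/ (l' = t /\ c' = c)).
Proof. intro H. inv_step H; pick. Qed.

Lemma step_q1 c l' c' : step (q1, c) (l', c') ->
  0 < c /\ ((l' = q2 /\ c' = c - 1) \/ (l' = q1 /\ c' = c - 1) \/ (l' = tbar /\ c' = c)).
Proof. intro H. inv_step H; pick. Qed.

Lemma step_q2 c l' c' : step (q2, c) (l', c') ->
  0 < c /\ ((l' = q3 /\ c' = c - 1) \/ (l' = t /\ c' = c)).
Proof. intro H. inv_step H; pick. Qed.

Lemma step_q3 c l' c' : step (q3, c) (l', c') ->
  0 < c /\ ((l' = q0 /\ c' = c - 1) \/ (l' = q3 /\ c' = c - 1) \/ (l' = tbar /\ c' = c)).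
Proof. intro H. inv_step H; pick. Qed.

Lemma step_f c l' c' : step (f, c) (l', c') -> 0 < c /\ l' = g /\ c' = c - 1.
Proof. intro H. inv_step H; pick. Qed.

Lemma step_g c l' c' : step (g, c) (l', c') -> 0 < c /\ l' = f /\ c' = c - 1.
Proof. intro H. inv_step H; pick. Qed.

Lemma step_t_f c c' : step (t, c) (f, c') -> c' = c.
Proof. intro H. inv_step H; lia. Qed.

Lemma step_tbar_f c c' : step (tbar, c) (f, c') -> 0 < c /\ c' = c - 1.
Proof. intro H. inv_step H; lia. Qed.

Definition tests_divisibility (M : nat) (p : ctl) : Prop := forall l k,
  sat p (l, k) <-> (l = t /\ k mod M = 0) \/ (l = tbar /\ k mod M <> 0).

Lemma sat_tbar_of_tests M p n : tests_divisibility M p ->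
  (sat p (tbar, n) <-> n mod M <> 0).
Proof. intros Hp. rewrite (Hp tbar n). intuition discriminate. Qed.

Definition f_stuck : ctl := CAnd (CAtom f) (CNot (CEX (CAtom g))).

Lemma EF_f_stuck_parity x : sat (CEF f_stuck) x ->
  (fst x = f -> snd x mod 2 = 0) /\ (fst x = g -> snd x mod 2 = 1).
Proof.
  intro H. change (EU_holds (sat CTrue) (sat f_stuck) x) in H.
  induction H as [[l c] [Hl Hn] | [l c] [l' c'] _ Hs _ IH]; cbn [fst snd sat] in *.
  - subst l. split; [|discriminate]. intros _.
    destruct c as [|c]; [reflexivity|]. exfalso. apply Hn.
    exists (g, c). split; [solve_step | reflexivity].
  - pose proof (mod2_pred c). split; intros ->.
    + apply step_f in Hs as [Hc [-> ->]]. destruct IH as [_ IH].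
      specialize (IH eq_refl). lia.
    + apply step_g in Hs as [Hc [-> ->]]. destruct IH as [IH _].
      specialize (IH eq_refl). lia.
Qed.

Lemma sat_EF_f_stuck m : sat (CEF f_stuck) (f, m) <-> m mod 2 = 0.
Proof.
  split.
  - intro H. exact (proj1 (EF_f_stuck_parity _ H) eq_refl).
  - intros Hm. rewrite (Nat.div_mod_eq m 2), Hm, Nat.add_0_r.
    induction (m / 2) as [|h IH].
    + apply EU_now. split; [reflexivity|]. intros [[l' c'] [Hs _]].
      apply step_f in Hs. lia.
    + apply EU_later with (g, S (2 * h)); [exact I | solve_step |].
      apply EU_later with (f, 2 * h); [exact I | solve_step | exact IH].
Qed.

Lemma phi1_tests_parity : tests_divisibility 2 phi1.
Proof.
  intros l k. unfold phi1, test. cbn [sat fst]. split.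
  - intros [Ht [[l' c'] [Hs [Hl' Hev]]]]. cbn [fst] in Hl'. subst l'.
    apply sat_EF_f_stuck in Hev.
    destruct Ht as [-> | ->].
    + apply step_t_f in Hs as ->. left. split; [reflexivity | exact Hev].
    + apply step_tbar_f in Hs as [Hk ->]. pose proof (mod2_pred k Hk).
      right. split; [reflexivity | lia].
  - intros [[-> Hk] | [-> Hk]].
    + split; [left; reflexivity|]. exists (f, k).
      split; [destruct k; solve_step | split; [reflexivity|]].
      apply sat_EF_f_stuck. exact Hk.
    + split; [right; reflexivity|].
      destruct k as [|k]; [cbn in Hk; congruence|].
      exists (f, k). split; [solve_step | split; [reflexivity|]].
      apply sat_EF_f_stuck. pose proof (mod2_pred (S k)).
      replace (S k - 1) with k in * by lia. lia.
Qed.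

Definition phase (M : nat) (l : loc) (c : nat) : Prop :=
  match l with
  | q0 => c mod (2 * M) = 0
  | q1 => M < c mod (2 * M)
  | q2 => c mod (2 * M) = M
  | q3 => 0 < c mod (2 * M) < M
  | _ => False
  end.

Definition test_guard (M : nat) (l : loc) (c : nat) : Prop :=
  match l with
  | q0 | q2 => c mod M = 0
  | q1 | q3 => c mod M <> 0
  | _ => False
  end.

Ltac phase_arith M d :=
  pose proof (mod_succ_cases (2 * M) d ltac:(lia));
  pose proof (mod_double_eq0 M (S d) ltac:(lia));
  pose proof (Nat.mod_upper_bound (S d) (2 * M) ltac:(lia));
  pose proof (Nat.mod_upper_bound d (2 * M) ltac:(lia));
  lia.

Lemma phase_step M l c l' c' : 2 <= M -> test_guard M l c ->
  step (l, c) (l', c') -> phase M l' c' -> phase M l c.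
Proof.
  intros HM Hg Hs Hph.
  destruct l; cbn [test_guard] in Hg; try contradiction;
    [apply step_q0 in Hs | apply step_q1 in Hs | apply step_q2 in Hs | apply step_q3 in Hs];
    destruct Hs as [Hc Hs]; destruct c as [|d]; try lia;
    replace (S d - 1) with d in Hs by lia;
    repeat destruct Hs as [Hs | Hs]; destruct Hs as [-> ->];
    cbn [phase] in *; try contradiction; phase_arith M d.
Qed.

Lemma phase_succ_step M l d : 2 <= M -> phase M l (S d) ->
  test_guard M l (S d) /\ exists l', step (l, S d) (l', d) /\ phase M l' d.
Proof.
  intros HM Hph.
  destruct l; cbn [phase test_guard] in *; try contradiction.
  - split; [phase_arith M d|]. exists q1. split; [solve_step | cbn [phase]; phase_arith M d].
  - split; [phase_arith M d|].
    destruct (Nat.eq_dec (d mod (2 * M)) M).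
    + exists q2. split; [solve_step | cbn [phase]; phase_arith M d].
    + exists q1. split; [solve_step | cbn [phase]; phase_arith M d].
  - split; [phase_arith M d|]. exists q3. split; [solve_step | cbn [phase]; phase_arith M d].
  - split; [phase_arith M d|].
    destruct (Nat.eq_dec (d mod (2 * M)) 0).
    + exists q0. split; [solve_step | cbn [phase]; phase_arith M d].
    + exists q3. split; [solve_step | cbn [phase]; phase_arith M d].
Qed.

Lemma step_t_phase M c l' c' : step (t, c) (l', c') -> phase M l' c' ->
  l' = q0 /\ c' = c.
Proof. intros Hs Hph. inv_step Hs; cbn [phase] in Hph; try contradiction; pick. Qed.

Lemma step_tbar_phase M c l' c' : step (tbar, c) (l', c') -> phase M l' c' ->
  0 < c /\ c' = c /\ (l' = q1 \/ l' = q2 \/ l' = q3).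
Proof. intros Hs Hph. inv_step Hs; cbn [phase] in Hph; try contradiction; pick. Qed.

Lemma step_tbar_diamond c l : 0 < c -> l = q1 \/ l = q2 \/ l = q3 ->
  step (tbar, c) (l, c).
Proof. intros Hc [-> | [-> | ->]]; solve_step. Qed.

Definition q0_stuck : ctl := CAnd (CAtom q0) (CNot (CEX (CAtom q1))).

Lemma sat_q0_stuck l c : sat q0_stuck (l, c) <-> l = q0 /\ c = 0.
Proof.
  cbn [q0_stuck sat fst]. split.
  - intros [-> Hn]. split; [reflexivity|]. destruct c as [|c]; [reflexivity|].
    exfalso. apply Hn. exists (q1, c). split; [solve_step | reflexivity].
  - intros [-> ->]. split; [reflexivity|]. intros [[l' c'] [Hs _]].
    apply step_q0 in Hs. lia.
Qed.

Definition diamond_move (p : ctl) : ctl := CAnd phi_diamond (CEX p).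

Section Doubling.

Variables (M : nat) (p : ctl).
Hypothesis HM : 2 <= M.
Hypothesis Hp : tests_divisibility M p.

Lemma sat_diamond_move l c :
  sat (diamond_move p) (l, c) <-> 0 < c /\ test_guard M l c.
Proof.
  unfold diamond_move, phi_diamond. cbn [sat fst]. split.
  - intros [Hl [[l' c'] [Hs Hp']]]. apply Hp in Hp'.
    destruct Hl as [[-> | ->] | [-> | ->]]; cbn [test_guard];
      [apply step_q0 in Hs | apply step_q1 in Hs | apply step_q2 in Hs | apply step_q3 in Hs];
      intuition congruence.
  - intros [Hc Hg].
    destruct l; cbn [test_guard] in Hg; try contradiction; (split; [pick|]);
      [exists (t, c) | exists (tbar, c) | exists (t, c) | exists (tbar, c)];
      (split; [solve_step | apply Hp; pick]).
Qed.

Lemma sat_mu_of l c : sat (mu_of p) (l, c) <-> phase M l c.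
Proof.
  split.
  - intro H. change (EU_holds (sat (diamond_move p)) (sat q0_stuck) (l, c)) in H.
    change (phase M (fst (l, c)) (snd (l, c))).
    induction H as [[l1 c1] Hb | [l1 c1] [l2 c2] Ha Hs _ IH]; cbn [fst snd] in *.
    + apply sat_q0_stuck in Hb as [-> ->]. apply Nat.Div0.mod_0_l.
    + apply sat_diamond_move in Ha as [_ Hg]. exact (phase_step M l1 c1 l2 c2 HM Hg Hs IH).
  - revert l. induction c as [|d IH]; intros l Hph.
    + apply EU_now. apply sat_q0_stuck.
      destruct l; cbn [phase] in Hph; rewrite ?Nat.Div0.mod_0_l in Hph;
        try contradiction; first [pick | exfalso; lia].
    + destruct (phase_succ_step M l d HM Hph) as [Hg [l' [Hs Hph']]].
      apply EU_later with (l', d); [apply sat_diamond_move; split; [lia | exact Hg] | exact Hs |].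
      apply IH. exact Hph'.
Qed.

Lemma tests_next : tests_divisibility (2 * M) (CAnd test (CEX (mu_of p))).
Proof.
  intros l k. unfold test. cbn [sat fst]. split.
  - intros [Ht [[l' c'] [Hs Hmu]]]. apply sat_mu_of in Hmu.
    destruct Ht as [-> | ->].
    + destruct (step_t_phase M k l' c' Hs Hmu) as [-> ->]. left. split; [reflexivity | exact Hmu].
    + destruct (step_tbar_phase M k l' c' Hs Hmu) as [_ [-> Hl']].
      right. split; [reflexivity|].
      destruct Hl' as [-> | [-> | ->]]; cbn [phase] in Hmu; lia.
  - intros [[-> Hk] | [-> Hk]].
    + split; [left; reflexivity|]. exists (q0, k).
      split; [destruct k; solve_step | apply sat_mu_of; exact Hk].
    + split; [right; reflexivity|].
      assert (Hpos : 0 < k) by (destruct k; [rewrite Nat.Div0.mod_0_l in Hk|]; lia).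
      destruct (lt_eq_lt_dec (k mod (2 * M)) M) as [[Hlt | Heq] | Hgt];
        [exists (q3, k) | exists (q2, k) | exists (q1, k)];
        (split; [apply step_tbar_diamond; [exact Hpos | pick] |]);
        apply sat_mu_of; cbn [phase]; lia.
Qed.

Lemma sat_psi_tbar n :
  sat (CAnd (CAtom tbar) (CEX (CAnd (COr (CAtom q1) (CAtom q2)) (mu_of p)))) (tbar, n)
  <-> M <= n mod (2 * M).
Proof.
  cbn [sat fst]. split.
  - intros [_ [[l' c'] [Hs [Hl' Hmu]]]]. cbn [fst] in Hl'. apply sat_mu_of in Hmu.
    destruct (step_tbar_phase M n l' c' Hs Hmu) as [_ [-> _]].
    destruct Hl' as [-> | ->]; cbn [phase] in Hmu; lia.
  - intros Hge. split; [reflexivity|].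
    assert (Hpos : 0 < n) by (destruct n; [rewrite Nat.Div0.mod_0_l in Hge|]; lia).
    destruct (Nat.eq_dec (n mod (2 * M)) M);
      [exists (q2, n) | exists (q1, n)];
      (split; [apply step_tbar_diamond; [exact Hpos | pick] | split; [cbn; pick|]]);
      apply sat_mu_of; cbn [phase]; lia.
Qed.

End Doubling.

Lemma phi_tests_divisibility j : tests_divisibility (2 ^ S j) (phi (S j)).
Proof.
  induction j as [|j IH].
  - exact phi1_tests_parity.
  - exact (tests_next (2 ^ S j) (phi (S j)) (pow2_succ_ge2 j) IH).
Qed.

Theorem lemma2 : forall (n i : nat), 1 <= i ->
  (sat (psi i) (tbar, n) <-> bit i n = 1).
Proof.
  intros n [|[|j]] Hi; [lia | |].
  - change (bit 1 n) with ((n / 1) mod 2). rewrite Nat.div_1_r.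
    rewrite (sat_tbar_of_tests 2 (psi 1) n phi1_tests_parity).
    pose proof (Nat.mod_upper_bound n 2 ltac:(lia)). lia.
  - exact (iff_trans
             (sat_psi_tbar (2 ^ S j) (phi (S j)) (pow2_succ_ge2 j) (phi_tests_divisibility j) n)
             (mod_double_ge (2 ^ S j) n (Nat.pow_nonzero 2 (S j) ltac:(lia)))).
Qed.
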